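(* Let $R$ be a reflexive relation on $U$. Then $\mathrm{DM(RS)}$ is spatial if and only if both $\wp(U)^{\blacktriangle}$ and $\wp(U)^{\vartriangle}$ are spatial.
   Context: Let $U$ be a set and $R\subseteq U\times U$ a binary relation. For $x\in U$, $R(x)=\{y\in U\mid (x,y)\in R\}$ and $\breve R(x)=\{y\in U\mid (y,x)\in R\}$. For $X\subseteq U$: $X^{\blacktriangledown}=\{x\in U\mid R(x)\subseteq X\}$, $X^{\blacktriangle}=\{x\in U\mid R(x)\cap X\neq\emptyset\}$, $X^{\triangledown}=\{x\in U\mid \breve R(x)\subseteq X\}$, $X^{\vartriangle}=\{x\in U\mid \breve R(x)\cap X\neq\emptyset\}$; composites like $X^{\vartriangle\blacktriangledown}$ mean $(X^{\vartriangle})^{\blacktriangledown}$. $\wp(U)^{\blacktriangledown}=\{X^{\blacktriangledown}\mid X\subseteq U\}$ and similarly $\wp(U)^{\blacktriangle},\wp(U)^{\vartriangle}$; complete lattices under $\subseteq$ (joins in $\wp(U)^{\blacktriangle},\wp(U)^{\vartriangle}$ are unions). $\mathcal S=\{x\in U\mid |R(x)|=1\}$. $\mathrm{RS}=\{(X^{\blacktriangledown},X^{\blacktriangle})\mid X\subseteq U\}$ ordered coordinatewise; $\mathrm{DM(RS)}$ is its Dedekind–MacNeille completion, identified with $\{(A,B)\in\wp(U)^{\blacktriangledown}\times\wp(U)^{\blacktriangle}\mid A^{\vartriangle\blacktriangle}\subseteq B,\ A\cap\mathcal S=B\cap\mathcal S\}$ ordered coordinatewise, with meets $\bigwedge_i(X_i,Y_i)=(\bigcap_iX_i,(\bigcap_iY_i)^{\triangledown\blacktriangle})$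 and joins $\bigvee_i(X_i,Y_i)=((\bigcup_iX_i)^{\vartriangle\blacktriangledown},\bigcup_iY_i)$. An element $j$ of a complete lattice $L$ is completely join-irreducible if $j=\bigvee S$ implies $j\in S$ for every $S\subseteq L$; $L$ is spatial if every element is the join of the completely join-irreducible elements below it. *)

From mathcomp Require Import all_boot.
From mathcomp Require Import boolp classical_sets.
Set Implicit Arguments. Unset Strict Implicit. Unset Printing Implicit Defensive.
Local Open Scope classical_set_scope.

Section RoughDefs.
Variables (U : Type) (R : U -> U -> Prop).

Definition Rimg (x : U) : set U := [set y | R x y].
Definition Rimg_inv (x : U) : set U := [set y | R y x].

Definition bdown (X : set U) : set U := [set x | Rimg x `<=` X].
Definition bup (X : set U) : set U := [set x | Rimg x `&` X !=set0].
Definition wdown (X : set U) : set U := [set x | Rimg_inv x `<=` X].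
Definition wup (X : set U) : set U := [set x | Rimg_inv x `&` X !=set0].

Definition Ssing : set U := [set x | exists y, Rimg x = [set y]].

(* the lattices  wp(U)^{black up}  and  wp(U)^{white up}  (as carriers, ordered by inclusion) *)
Definition Pbup : set (set U) := [set Y | exists X, Y = bup X].
Definition Pwup : set (set U) := [set Y | exists X, Y = wup X].

Definition DMRS : set (set U * set U) :=
  [set p | (exists X, p.1 = bdown X) /\ (exists X, p.2 = bup X) /\
           bup (wup p.1) `<=` p.2 /\ p.1 `&` Ssing = p.2 `&` Ssing].
End RoughDefs.

Definition set_le (U : Type) (A B : set U) : Prop := A `<=` B.
Definition pair_le (U : Type) (p q : set U * set U) : Prop :=
  p.1 `<=` q.1 /\ p.2 `<=` q.2.

Section Spatial.
Variables (T : Type) (P : set T) (le : T -> T -> Prop).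

Definition is_join (S : set T) (x : T) : Prop :=
  P x /\ (forall s, S s -> le s x) /\
  (forall y, P y -> (forall s, S s -> le s y) -> le x y).

Definition compl_join_irr (j : T) : Prop :=
  P j /\ forall S : set T, S `<=` P -> is_join S j -> S j.

Definition spatial : Prop :=
  forall x, P x -> is_join [set j | compl_join_irr j /\ le j x] x.
End Spatial.

From mathcomp Require Import all_boot.
From mathcomp Require Import boolp classical_sets.
Set Implicit Arguments. Unset Strict Implicit. Unset Printing Implicit Defensive.
Local Open Scope classical_set_scope.

(* Joins of ▲-sets are unions, and joins in DM(RS) are ((⋃ A_i)^△▼, ⋃ B_i);
   so a lattice of ▲-sets is spatial iff every {x}^▲ is a union of
   irreducibles. As R is reflexive, R(s) = {s} for s ∈ S, and the
   irreducibles of DM(RS) are of two kinds: (∅, k) with k an irreducible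
   ▲-set missing S, and (c^▼, c^▲) with c an irreducible △-set. If both
   lattices are spatial, the first component of an element of DM(RS) is
   covered by irreducibles of the second kind and its second component by
   irreducibles of both kinds. Conversely, {x}^▲ (for x ∉ S; otherwise it is
   itself irreducible) and {x}^△ are covered by the second, resp. first,
   components of the irreducibles below (∅, {x}^▲), resp. ({x}^△▼, {x}^△▲). *)

Section Galois.
Variables (U : Type) (R : U -> U -> Prop).
Implicit Types (X Y : set U).

Lemma bupP X x : bup R X x <-> exists2 y, R x y & X y.
Proof. by split=> [[y [Rxy Xy]] | [y Rxy Xy]]; exists y. Qed.

Lemma wupP X x : wup R X x <-> exists2 y, R y x & X y.
Proof. by split=> [[y [Ryx Xy]] | [y Ryx Xy]]; exists y. Qed.

Lemma wup_sub_bdown X Y : wup R X `<=` Y <-> X `<=` bdown R Y.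
Proof.
split=> [XY x Xx z Rxz | XY z [x [Rxz /XY]]]; last exact.
by apply: XY; exists x.
Qed.

Lemma sub_bdown_wup X : X `<=` bdown R (wup R X).
Proof. exact/wup_sub_bdown. Qed.

Lemma wup_bdown_sub Y : wup R (bdown R Y) `<=` Y.
Proof. exact/wup_sub_bdown. Qed.

Lemma wupS X Y : X `<=` Y -> wup R X `<=` wup R Y.
Proof. by move=> XY z [x [Rxz /XY Yx]]; exists x. Qed.

Lemma bdownS X Y : X `<=` Y -> bdown R X `<=` bdown R Y.
Proof. by move=> XY x Rx z /Rx /XY. Qed.

Lemma wup_bdownK X : wup R (bdown R (wup R X)) = wup R X.
Proof.
apply/seteqP; split; first exact: wup_bdown_sub.
by apply: wupS; exact: sub_bdown_wup.
Qed.

Lemma bdown_wupK X : bdown R (wup R (bdown R X)) = bdown R X.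
Proof.
apply/seteqP; split; last exact: sub_bdown_wup.
by apply: bdownS; exact: wup_bdown_sub.
Qed.

Lemma wup0 : wup R set0 = set0.
Proof. by rewrite -subset0 => z /wupP[]. Qed.

Lemma wup_bigcup I (P : set I) (F : I -> set U) :
  wup R (\bigcup_(i in P) F i) = \bigcup_(i in P) wup R (F i).
Proof.
apply/seteqP; split=> [z [x [Rxz [i Pi Fx]]] | z [i Pi [x [Rxz Fx]]]].
  by exists i => //; exists x.
by exists x; split => //; exists i.
Qed.

Lemma PwupK C : Pwup R C -> wup R (bdown R C) = C.
Proof. by move=> [X ->]; exact: wup_bdownK. Qed.

Lemma Pwup_bigcup I (P : set I) (F : I -> set U) :
  (forall i, P i -> Pwup R (F i)) -> Pwup R (\bigcup_(i in P) F i).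
Proof.
move=> PF; exists (\bigcup_(i in P) bdown R (F i)); rewrite wup_bigcup.
by apply: eq_bigcupr => i /PF /PwupK.
Qed.

End Galois.

(* [wup R], [bdown R] and [Pwup R] are convertible to [bup], [wdown] and [Pbup]
   of the converse relation. *)
Section Converse.
Variables (U : Type) (R : U -> U -> Prop).

Lemma bup_sub_wdown X Y : bup R X `<=` Y <-> X `<=` wdown R Y.
Proof. exact: (wup_sub_bdown (fun x y => R y x)). Qed.

Lemma bupS X Y : X `<=` Y -> bup R X `<=` bup R Y.
Proof. exact: (@wupS _ (fun x y => R y x) X Y). Qed.

Lemma bup_bigcup I (P : set I) (F : I -> set U) :
  bup R (\bigcup_(i in P) F i) = \bigcup_(i in P) bup R (F i).
Proof. exact: (wup_bigcup (fun x y => R y x)). Qed.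

Lemma PbupK k : Pbup R k -> bup R (wdown R k) = k.
Proof. exact: (@PwupK _ (fun x y => R y x) k). Qed.

Lemma Pbup_bigcup I (P : set I) (F : I -> set U) :
  (forall i, P i -> Pbup R (F i)) -> Pbup R (\bigcup_(i in P) F i).
Proof. exact: (@Pwup_bigcup _ (fun x y => R y x) I P F). Qed.
End Converse.

Section CompleteLattice.
Variables (T : Type) (P : set T) (le : T -> T -> Prop) (join : set T -> T).
Hypothesis le_anti : forall x y, le x y -> le y x -> x = y.
Hypothesis is_join_join : forall S, S `<=` P -> is_join P le S (join S).

Lemma is_joinE S x : S `<=` P -> is_join P le S x <-> x = join S.
Proof.
move=> SP; have [Pj [ubj lej]] := is_join_join SP.
split=> [[Px [ubx lex]] | ->]; last exact: is_join_join.
by apply: le_anti; [exact: lex | exact: lej].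
Qed.

Lemma compl_join_irrP j :
  compl_join_irr P le j <-> P j /\ forall S, S `<=` P -> j = join S -> S j.
Proof.
split=> -[Pj irr_j]; split=> // S SP.
  by move=> ej; apply: irr_j => //; apply/is_joinE.
by move=> /is_joinE => /(_ SP) ej; exact: irr_j.
Qed.

Lemma spatialP :
  spatial P le <-> forall x, P x -> x = join [set j | compl_join_irr P le j /\ le j x].
Proof.
have JP x : [set j | compl_join_irr P le j /\ le j x] `<=` P by move=> j [[]].
by split=> sp x Px; apply/(is_joinE _ (JP x)); exact: sp.
Qed.

End CompleteLattice.

Lemma set_le_anti U (A B : set U) : set_le A B -> set_le B A -> A = B.
Proof. by move=> AB BA; apply/seteqP. Qed.

Section BupLattice.
Variables (U : Type) (R : U -> U -> Prop).

Lemma is_join_Pbup (G : set (set U)) :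
  G `<=` Pbup R -> is_join (Pbup R) (@set_le U) G (\bigcup_(g in G) g).
Proof.
move=> GP; split; first exact: Pbup_bigcup.
by split=> [g Gg | Y _]; [exact: bigcup_sup | exact: bigcup_sub].
Qed.

Local Notation cji_bup := (compl_join_irr (Pbup R) (@set_le U)).

Lemma cji_PbupP k :
  cji_bup k <-> Pbup R k /\ forall G, G `<=` Pbup R -> k = \bigcup_(g in G) g -> G k.
Proof.
exact: (compl_join_irrP (join := fun G => \bigcup_(g in G) g) (@set_le_anti U) is_join_Pbup).
Qed.

Lemma spatial_PbupP :
  spatial (Pbup R) (@set_le U) <->
  forall x y, R y x -> exists k, [/\ cji_bup k, k y & k `<=` bup R [set x]].
Proof.
rewrite (spatialP (@set_le_anti U) is_join_Pbup).
split=> [sp x y Ryx | cover _ [X ->]].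
  have := sp _ (ex_intro _ [set x] erefl) => /seteqP[+ _] => /(_ y).
  by case=> [|k [cji_k k_x] ky]; [apply/bupP; exists x | exists k].
apply/seteqP; split=> [b /bupP[x Rbx Xx] | b [k [_ kX] kb]]; last exact: kX.
have [k [cji_k kb k_x]] := cover x b Rbx.
exists k => //; split=> // z /k_x /bupP[t Rzt tx].
by apply/bupP; exists t; rewrite // tx.
Qed.

End BupLattice.

Lemma cji_PwupP U (R : U -> U -> Prop) k :
  compl_join_irr (Pwup R) (@set_le U) k <->
  Pwup R k /\ forall G, G `<=` Pwup R -> k = \bigcup_(g in G) g -> G k.
Proof. exact: (cji_PbupP (fun x y => R y x)). Qed.

Lemma pair_le_anti U (p q : set U * set U) : pair_le p q -> pair_le q p -> p = q.
Proof.
case: p q => [A B] [A' B'] [/= AA' BB'] [/= A'A B'B].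
by congr pair; apply/seteqP.
Qed.

Section DedekindMacNeille.
Variables (U : Type) (R : U -> U -> Prop).
Hypothesis Rrefl : forall x, R x x.
Implicit Types (X : set U) (p : set U * set U).

Lemma Ssing_eq s t : Ssing R s -> R s t -> t = s.
Proof.
move=> [y Rs_y] Rst.
have Ry z : R s z -> z = y by move=> Rsz; have : Rimg R s z := Rsz; rewrite Rs_y.
by rewrite (Ry t Rst) (Ry s (Rrefl s)).
Qed.

Lemma bdown_Ssing X s : Ssing R s -> bdown R X s <-> X s.
Proof.
move=> Ss; split=> [sX | Xs t /(Ssing_eq Ss) -> //]; exact: sX s (Rrefl s).
Qed.

Lemma bup_Ssing X s : Ssing R s -> bup R X s <-> X s.
Proof.
move=> Ss; split=> [/bupP[t /(Ssing_eq Ss) -> //] | Xs].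
by apply/bupP; exists s.
Qed.

Lemma setI_Ssing_bup1 x : ~ Ssing R x -> bup R [set x] `&` Ssing R = set0.
Proof.
move=> Sx; rewrite -subset0 => s [/bupP[t Rst tx] Ss]; apply: Sx.
by rewrite -tx (Ssing_eq Ss Rst).
Qed.

Lemma eq_setI_Ssing A B :
  (forall s, Ssing R s -> A s <-> B s) -> A `&` Ssing R = B `&` Ssing R.
Proof. by move=> AB; apply/seteqP; split=> s [/AB + Ss] => /(_ Ss) ? //. Qed.

Definition dm_join (F : set (set U * set U)) : set U * set U :=
  (bdown R (wup R (\bigcup_(f in F) f.1)), \bigcup_(f in F) f.2).

Lemma dm_join_ub F f : F f -> pair_le f (dm_join F).
Proof.
move=> Ff; split; last exact: bigcup_sup.
apply: (subset_trans (bigcup_sup (F := fst) Ff)); exact: sub_bdown_wup.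
Qed.

Lemma DMRS_Ssing p s : DMRS R p -> Ssing R s -> p.2 s <-> wup R p.1 s.
Proof.
move=> [_ [_ [p_le p_S]]] Ss; split=> [p2s | /(bup_Ssing _ Ss) /p_le //].
have [] : (p.1 `&` Ssing R) s by rewrite p_S.
by move=> p1s _; apply/wupP; exists s.
Qed.

Lemma DMRS_fstK p : DMRS R p -> bdown R (wup R p.1) = p.1.
Proof. by move=> [[X ->] _]; exact: bdown_wupK. Qed.

Lemma DMRS_dm_join F : F `<=` DMRS R -> DMRS R (dm_join F).
Proof.
move=> FD; split; first by exists (wup R (\bigcup_(f in F) f.1)).
split; first by apply: Pbup_bigcup => f /FD [_ []].
split.
  rewrite /= wup_bdownK wup_bigcup bup_bigcup; apply: bigcup_sub => f Ff.
  have [_ [_ [f_le _]]] := FD f Ff.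
  exact: (subset_trans f_le (bigcup_sup (F := snd) Ff)).
apply: eq_setI_Ssing => s Ss; rewrite /= bdown_Ssing // wup_bigcup.
by split=> -[f Ff fs]; exists f => //; apply/(DMRS_Ssing (FD f Ff) Ss).
Qed.

Lemma is_join_dm_join F : F `<=` DMRS R -> is_join (DMRS R) (@pair_le U) F (dm_join F).
Proof.
move=> FD; split; first exact: DMRS_dm_join.
split=> [f|q [[X qX] _] ubq]; first exact: dm_join_ub.
split; last by apply: bigcup_sub => f /ubq [].
rewrite /= qX -[bdown R X]bdown_wupK; apply: bdownS; apply: wupS.
by apply: bigcup_sub => f /ubq [+ _]; rewrite qX.
Qed.

Local Notation cji_dm := (compl_join_irr (DMRS R) (@pair_le U)).
Local Notation cji_bup := (compl_join_irr (Pbup R) (@set_le U)).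
Local Notation cji_wup := (compl_join_irr (Pwup R) (@set_le U)).

Lemma cji_DMRSP j :
  cji_dm j <-> DMRS R j /\ forall F, F `<=` DMRS R -> j = dm_join F -> F j.
Proof. exact: (compl_join_irrP (join := dm_join) (@pair_le_anti U) is_join_dm_join). Qed.

Definition cji_below p := [set j | cji_dm j /\ pair_le j p].

Lemma bdown0 : bdown R set0 = set0.
Proof. by rewrite -subset0 => x /(_ x (Rrefl x)). Qed.

Lemma DMRS_set0 k : Pbup R k -> k `&` Ssing R = set0 -> DMRS R (set0, k).
Proof.
move=> Pk kS; split; first by exists set0; rewrite bdown0.
split=> //; split; first by move=> b /bupP[w _ /wupP[a _ []]].
by rewrite set0I kS.
Qed.

Lemma cji_DMRS_set0 k : cji_bup k -> k `&` Ssing R = set0 -> cji_dm (set0, k).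
Proof.
move=> /cji_PbupP[Pk irr_k] kS; apply/cji_DMRSP; split; first exact: DMRS_set0.
move=> F FD e; have [f Ff fk] : [set f.2 | f in F] k.
  apply: irr_k; first by move=> _ [f /FD[_ [Pf2 _]] <-].
  by rewrite bigcup_image; exact: (congr1 snd e).
have f1 : f.1 = set0.
  by rewrite -subset0 [set0](congr1 fst e); have [] := dm_join_ub Ff.
by rewrite -f1 -fk -surjective_pairing.
Qed.

Definition dm_of_wup c : set U * set U := (bdown R c, bup R (wup R (bdown R c))).

Lemma DMRS_dm_of_wup c : DMRS R (dm_of_wup c).
Proof.
split; first by exists c.
split; first by exists (wup R (bdown R c)).
split=> //; apply: eq_setI_Ssing => s Ss /=.
split=> [/(bdown_Ssing _ Ss) cs | /(bup_Ssing _ Ss) ws].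
  by apply/(bup_Ssing _ Ss)/wupP; exists s => //; apply/(bdown_Ssing _ Ss).
by apply/(bdown_Ssing _ Ss); exact: wup_bdown_sub ws.
Qed.

Lemma cji_DMRS_of_wup c : cji_wup c -> cji_dm (dm_of_wup c).
Proof.
move=> /cji_PwupP[Pc irr_c]; apply/cji_DMRSP; split; first exact: DMRS_dm_of_wup.
move=> F FD e; have [f Ff fc] : [set wup R f.1 | f in F] c.
  apply: irr_c; first by move=> _ [f _ <-]; exists f.1.
  by rewrite bigcup_image -wup_bigcup -(PwupK Pc) [bdown R c](congr1 fst e) wup_bdownK.
have [_ [_ [f_le _]]] := FD f Ff.
have f1c : f.1 = bdown R c by rewrite -fc (DMRS_fstK (FD f Ff)).
suff -> : dm_of_wup c = f by [].
apply: pair_le_anti; last by rewrite e; exact: dm_join_ub.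
by split; rewrite /= -f1c.
Qed.

Lemma cji_DMRS_snd j : cji_dm j -> j.1 = set0 -> cji_bup j.2.
Proof.
move=> /cji_DMRSP[[_ [Pj2 [_ jS]]] irr_j] j1; apply/cji_PbupP; split=> // G GP j2G.
have GS g : G g -> g `&` Ssing R = set0.
  move=> Gg; rewrite -subset0 => s [gs Ss].
  have : (j.2 `&` Ssing R) s by split=> //; rewrite j2G; exists g.
  by rewrite -jS j1 => -[].
have [g Gg <-] : [set (set0, g) | g in G] j.
  apply: irr_j; first by move=> _ [g Gg <-]; apply: DMRS_set0; [exact: GP | exact: GS].
  rewrite /dm_join !bigcup_image /= bigcup0 // wup0 bdown0.
  by rewrite -j1 -j2G -surjective_pairing.
by [].
Qed.

Lemma dm_of_wup_le p c : DMRS R p -> c `<=` wup R p.1 -> pair_le (dm_of_wup c) p.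
Proof.
move=> Dp cp; have [_ [_ [p_le _]]] := Dp.
have c1 : bdown R c `<=` p.1 by rewrite -(DMRS_fstK Dp); exact: bdownS.
by split=> //; apply: subset_trans p_le; apply: bupS; exact: wupS.
Qed.

Lemma dm_join_of_wup CC :
  CC `<=` Pwup R -> dm_join [set dm_of_wup C | C in CC] = dm_of_wup (\bigcup_(C in CC) C).
Proof.
move=> CP; have eCC : \bigcup_(C in CC) wup R (bdown R C) = \bigcup_(C in CC) C.
  by apply: eq_bigcupr => C /CP /PwupK.
rewrite /dm_join /dm_of_wup !bigcup_image /= wup_bigcup eCC -bup_bigcup eCC.
by rewrite PwupK //; exact: Pwup_bigcup.
Qed.

Lemma cji_DMRS_fstE j : cji_dm j -> j.1 !=set0 -> j = dm_of_wup (wup R j.1).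
Proof.
move=> /cji_DMRSP[Dj irr_j] [a0 j1a0]; have [_ [Pj2 [j_le jS]]] := Dj.
(* j is the join of (j.1, j.1^△▲) and the (∅, {w}^▲) with w ∈ j.2^▽ outside S. *)
pose N := [set (set0 : set U, bup R [set w]) | w in wdown R j.2 `\` Ssing R].
have : ([set dm_of_wup (wup R j.1)] `|` N) j.
  apply: irr_j.
    move=> _ [-> | [w [_ Sw] <-]]; first exact: DMRS_dm_of_wup.
    by apply: DMRS_set0; [exists [set w] | exact: setI_Ssing_bup1].
  rewrite /dm_join /dm_of_wup !bigcup_setU !bigcup_set1 !bigcup_image /=.
  rewrite bigcup0 // setU0 !(DMRS_fstK Dj) [j in LHS]surjective_pairing.
  congr pair; apply/seteqP; split; last first.
    move=> b [/j_le // | [w [j2w _] /bupP[t Rbt tw]]].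
    by apply: j2w; rewrite -tw.
  rewrite -{1}(PbupK Pj2) => b /bupP[w Rbw j2w].
  have [Sw | Sw] := pselect (Ssing R w); last by right; exists w => //; apply/bupP; exists w.
  left; apply/bupP; exists w => //; apply/wupP; exists w => //.
  have : (j.2 `&` Ssing R) w by split=> //; exact: j2w.
  by rewrite -jS => -[].
by move=> [// | [w _ e]]; rewrite -e in j1a0.
Qed.

Lemma cji_DMRS_wup_fst j : cji_dm j -> j.1 !=set0 -> cji_wup (wup R j.1).
Proof.
move=> cji_j j1_ne; have /cji_DMRSP[_ irr_j] := cji_j.
apply/cji_PwupP; split=> [|CC CP eC]; first by exists j.1.
have [C CCC eCj] : [set dm_of_wup C | C in CC] j.
  apply: irr_j; first by move=> _ [C _ <-]; exact: DMRS_dm_of_wup.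
  by rewrite dm_join_of_wup // -eC -cji_DMRS_fstE.
by rewrite -eCj /= PwupK //; exact: CP.
Qed.

Lemma cji_bup1 x : Ssing R x -> cji_bup (bup R [set x]).
Proof.
move=> Sx; apply/cji_PbupP; split=> [|G GP ex]; first by exists [set x].
have [g Gg gx] : (\bigcup_(g in G) g) x by rewrite -ex; apply/bupP; exists x.
suff -> : bup R [set x] = g by [].
apply/seteqP; split; last by rewrite ex; exact: bigcup_sup.
have [X gX] := GP g Gg; move: gx; rewrite gX => /bupP[w Rxw Xw].
by apply: bupS => _ ->; rewrite -(Ssing_eq Sx Rxw).
Qed.

Lemma spatial_Pbup_of_DMRS : spatial (DMRS R) (@pair_le U) -> spatial (Pbup R) (@set_le U).
Proof.
rewrite (spatialP (@pair_le_anti U) is_join_dm_join) => sp.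
apply/spatial_PbupP => x y Ryx; have [Sx | Sx] := pselect (Ssing R x).
  by exists (bup R [set x]); split=> //; [exact: cji_bup1 | apply/bupP; exists x].
have e := sp _ (DMRS_set0 (ex_intro _ [set x] erefl) (setI_Ssing_bup1 Sx)).
have [j [cji_j [j1 j2]] j2y] : (dm_join (cji_below (set0, bup R [set x]))).2 y.
  by rewrite -e; apply/bupP; exists x.
by exists j.2; split=> //; apply: cji_DMRS_snd => //; rewrite -subset0.
Qed.

Lemma spatial_Pwup_of_DMRS : spatial (DMRS R) (@pair_le U) -> spatial (Pwup R) (@set_le U).
Proof.
rewrite (spatialP (@pair_le_anti U) is_join_dm_join) => sp.
apply/(spatial_PbupP (fun x y => R y x)) => x y Rxy.
set e := dm_of_wup (wup R [set x]).
have : e.1 x by apply: sub_bdown_wup.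
rewrite [e in e.1](sp e (DMRS_dm_of_wup _)) => /(_ y Rxy).
rewrite wup_bigcup => -[j [cji_j [j1 _]] j1y].
exists (wup R j.1); split=> //.
  by apply: cji_DMRS_wup_fst => //; case/wupP: j1y => a _ j1a; exists a.
by apply: subset_trans (wupS j1) _; rewrite wup_bdownK.
Qed.

Lemma fst_sub_dm_join_cji p : spatial (Pwup R) (@set_le U) -> DMRS R p ->
  p.1 `<=` (dm_join (cji_below p)).1.
Proof.
move=> /(spatial_PbupP (fun x y => R y x)) spW Dp a p1a z Raz.
have [c [cji_c cz c_a]] := spW a z Raz.
rewrite /= wup_bigcup; exists (dm_of_wup c).
  split; first exact: cji_DMRS_of_wup.
  by apply: dm_of_wup_le => //; apply: subset_trans c_a (wupS _) => _ ->.
by rewrite /= PwupK //; case: cji_c.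
Qed.

Lemma snd_sub_dm_join_cji p :
  spatial (Pbup R) (@set_le U) -> spatial (Pwup R) (@set_le U) -> DMRS R p ->
  p.2 `<=` (dm_join (cji_below p)).2.
Proof.
move=> /spatial_PbupP spB /(spatial_PbupP (fun x y => R y x)) spW Dp.
have [_ [Pp2 [_ pS]]] := Dp.
rewrite -{1}(PbupK Pp2) => b /bupP[w Rbw p2w].
have w_p : bup R [set w] `<=` p.2 by apply/bup_sub_wdown => _ ->.
have [Sw | Sw] := pselect (Ssing R w).
  have [c [cji_c cw c_w]] := spW w w (Rrefl w).
  have p1w : p.1 w.
    have : (p.2 `&` Ssing R) w by split=> //; apply: w_p; apply/bupP; exists w.
    by rewrite -pS => -[].
  exists (dm_of_wup c).
    split; first exact: cji_DMRS_of_wup.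
    by apply: dm_of_wup_le => //; apply: subset_trans c_w (wupS _) => _ ->.
  by apply/bupP; exists w => //; rewrite PwupK //; case: cji_c.
have [k [cji_k kb k_w]] := spB w b Rbw.
exists (set0, k) => //; split; last by split=> //=; exact: subset_trans k_w w_p.
apply: cji_DMRS_set0 => //; rewrite -subset0 -(setI_Ssing_bup1 Sw).
by move=> s [/k_w ks Ss].
Qed.

Lemma spatial_DMRS :
  spatial (Pbup R) (@set_le U) -> spatial (Pwup R) (@set_le U) ->
  spatial (DMRS R) (@pair_le U).
Proof.
move=> spB spW; apply/(spatialP (@pair_le_anti U) is_join_dm_join) => p Dp.
have JD : cji_below p `<=` DMRS R by move=> j [[]].
apply: pair_le_anti.
  by split; [exact: fst_sub_dm_join_cji | exact: snd_sub_dm_join_cji].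
by have [_ [_ least]] := is_join_dm_join JD; apply: least => // j [].
Qed.

End DedekindMacNeille.

Theorem mainTheorem5 (U : Type) (R : U -> U -> Prop) (Rrefl : forall x, R x x) :
  spatial (DMRS R) (@pair_le U) <->
  spatial (Pbup R) (@set_le U) /\ spatial (Pwup R) (@set_le U).
Proof.
split=> [sp | [spB spW]]; last exact: spatial_DMRS.
by split; [exact: spatial_Pbup_of_DMRS | exact: spatial_Pwup_of_DMRS].
Qed.
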